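(* The vector $\lambda=(\lambda_1,\dots,\lambda_m)$, $\lambda_j:=\nu_j+a_j-j$, is dominant (i.e. $\lambda_1\ge\lambda_2\ge\dots\ge\lambda_m$) and satisfies $$\lambda_j+\lambda_{m+1-j}=w'+n-m-1$$ for all $j\neq\frac{m+1}{2}$. In the exceptional case $n\equiv m\equiv1\bmod 2$ one has $2\lambda_{(m+1)/2}=w'+n-m-2$, whereas in the non-exceptional case the displayed identity holds for all $j=1,\dots,m$ (so $\lambda\in X_0^+(m)$ then).
   Context: Let $n,m\ge1$, not both $1$. For $N\ge1$: $L_0^+(N):=\{(w,l)\in\mathbb Z\times\mathbb Z^N:\ l_1>\dots>l_N,\ l_i+l_{N+1-i}=0,\ w+l_i\equiv N+1 \bmod 2\}$; $X^+(N):=\{\mu\in\mathbb Z^N:\mu_1\ge\dots\ge\mu_N\}$; $X_0^+(N):=\{\mu\in X^+(N): \mu_i+\mu_{N+1-i}\text{ is independent of } i\}$ (purity). There is a bijection $L_0^+(N)\to X_0^+(N)$, $(w,l)\mapsto\mu$ with $\mu_i=\frac{w+l_i+2i-1-N}{2}$, with inverse $w=\mu_1+\mu_N$, $l_i=2\mu_i+N+1-w-2i$. Let $\mu\in X_0^+(n)$ and $\nu\in X_0^+(m)$ correspond to $(w,l)\in L_0^+(n)$ and $(w',l')\in L_0^+(m)$. Standing assumptions: $l_1>l'_1$, and for every pair $(i,j)$ either $l_i\ne l'_j$, or $n,m$ are both odd, $i=\frac{n+1}2$, $j=\frac{m+1}2$ (this holds whenever the associated archimedean pair has a critical number). The position tuple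 $a\in\mathbb Z^m$: $a_j$ is the unique integer in $\{1,\dots,n-1\}$ with $l_{a_j}>l'_j\ge l_{1+a_j}$. *)

(* integer vectors are encoded as 1-indexed functions nat -> Z,
   only the entries with index 1..N are relevant. *)
From Stdlib Require Import ZArith Arith Lia.
Open Scope Z_scope.

Definition X0plus (N : nat) (mu : nat -> Z) : Prop :=
  (forall i : nat, (1 <= i < N)%nat -> mu i >= mu (S i)) /\
  (forall i : nat, (1 <= i <= N)%nat -> mu i + mu (N + 1 - i)%nat = mu 1%nat + mu N).

Definition L0plus (N : nat) (w : Z) (l : nat -> Z) : Prop :=
  (forall i : nat, (1 <= i < N)%nat -> l i > l (S i)) /\
  (forall i : nat, (1 <= i <= N)%nat -> l i + l (N + 1 - i)%nat = 0) /\
  (forall i : nat, (1 <= i <= N)%nat -> (w + l i - (Z.of_nat N + 1)) mod 2 = 0).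

(* inverse of the bijection L_0^+(N) -> X_0^+(N):  w = mu_1 + mu_N *)
Definition w_of (N : nat) (mu : nat -> Z) : Z := mu 1%nat + mu N.

Definition l_of (N : nat) (mu : nat -> Z) (i : nat) : Z :=
  2 * mu i + Z.of_nat N + 1 - w_of N mu - 2 * Z.of_nat i.

(* forward map (w,l) |-> mu, mu_i = (w + l_i + 2i - 1 - N)/2 (exact division) *)
Definition mu_of (N : nat) (w : Z) (l : nat -> Z) (i : nat) : Z :=
  (w + l i + 2 * Z.of_nat i - 1 - Z.of_nat N) / 2.

Definition is_position_tuple (n m : nat) (l l' : nat -> Z) (a : nat -> nat) : Prop :=
  forall j : nat, (1 <= j <= m)%nat ->
    (1 <= a j <= n - 1)%nat /\ l (a j) > l' j /\ l' j >= l (S (a j)).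

Definition lam (nu : nat -> Z) (a : nat -> nat) (j : nat) : Z :=
  nu j + Z.of_nat (a j) - Z.of_nat j.

(* The l-vectors of [mu] and [nu] are strictly decreasing with even gaps and
   antisymmetric, l_i + l_{N+1-i} = 0.  Negating the defining inequalities
   l_{a_j} > l'_j >= l_{a_j+1} and using antisymmetry shows that n - a_j is a
   position for l'_{m+1-j}, unless l'_j hits l_{a_j+1}; by uniqueness of
   positions a_j + a_{m+1-j} = n, which is the identity for lambda.  The only
   possible coincidence is l'_{(m+1)/2} = 0 = l_{(n+1)/2} for n, m odd, where
   a_{(m+1)/2} = (n-1)/2 instead.  Dominance follows from comparing the
   positions of l'_j and l'_{j+1}. *)
From Stdlib Require Import ZArith Arith Lia.
Open Scope Z_scope.

Section DecreasingWithEvenGaps.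

Variables (N : nat) (l : nat -> Z).
Hypothesis l_step : forall i : nat, (1 <= i < N)%nat -> l i >= l (S i) + 2.

Lemma l_gap (p q : nat) :
  (1 <= p)%nat -> (p <= q <= N)%nat -> l p >= l q + 2 * (Z.of_nat q - Z.of_nat p).
Proof.
  intros Hp [Hpq HqN]; induction q as [|q IH].
  - lia.
  - destruct (Nat.eq_dec p (S q)) as [-> | Hne]; [lia |].
    specialize (IH ltac:(lia) ltac:(lia)); specialize (l_step q ltac:(lia)); lia.
Qed.

Lemma position_unique (p r : nat) (x : Z) :
  (1 <= p < N)%nat -> (1 <= r < N)%nat ->
  l p > x -> x >= l (S p) -> l r > x -> x >= l (S r) -> p = r.
Proof.
  intros Hp Hr Hpx Hxp Hrx Hxr.
  destruct (Nat.lt_total p r) as [Hlt | [Heq | Hlt]]; [| exact Heq |].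
  - pose proof (l_gap (S p) r ltac:(lia) ltac:(lia)); lia.
  - pose proof (l_gap (S r) p ltac:(lia) ltac:(lia)); lia.
Qed.

End DecreasingWithEvenGaps.

Lemma l_of_step (N : nat) (mu : nat -> Z) :
  (forall i : nat, (1 <= i < N)%nat -> mu i >= mu (S i)) ->
  forall i : nat, (1 <= i < N)%nat -> l_of N mu i >= l_of N mu (S i) + 2.
Proof. intros Hmono i Hi; specialize (Hmono i Hi); unfold l_of; lia. Qed.

Lemma l_of_antisym (N : nat) (mu : nat -> Z) :
  (forall i : nat, (1 <= i <= N)%nat -> mu i + mu (N + 1 - i)%nat = mu 1%nat + mu N) ->
  forall i : nat, (1 <= i <= N)%nat -> l_of N mu i + l_of N mu (N + 1 - i)%nat = 0.
Proof. intros Hpure i Hi; specialize (Hpure i Hi); unfold l_of, w_of; lia. Qed.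

Section PositionTuple.

Variables (n m : nat) (l l' : nat -> Z) (a : nat -> nat).
Hypothesis l_step : forall i : nat, (1 <= i < n)%nat -> l i >= l (S i) + 2.
Hypothesis l_antisym : forall i : nat, (1 <= i <= n)%nat -> l i + l (n + 1 - i)%nat = 0.
Hypothesis l'_antisym : forall j : nat, (1 <= j <= m)%nat -> l' j + l' (m + 1 - j)%nat = 0.
Hypothesis Ha : is_position_tuple n m l l' a.

Lemma position_tuple_sym (j : nat) :
  (1 <= j <= m)%nat -> l (S (a j)) <> l' j -> (a j + a (m + 1 - j) = n)%nat.
Proof.
  intros Hj Hne.
  destruct (Ha j Hj) as [Haj Hlj].
  destruct (Ha (m + 1 - j)%nat ltac:(lia)) as [Haj' Hlj'].
  pose proof (l_antisym (a j) ltac:(lia)) as Hsym.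
  pose proof (l_antisym (S (a j)) ltac:(lia)) as Hsym_succ.
  pose proof (l'_antisym j Hj) as Hsym'.
  replace (n + 1 - S (a j))%nat with (n - a j)%nat in Hsym_succ by lia.
  replace (n + 1 - a j)%nat with (S (n - a j)) in Hsym by lia.
  enough (n - a j = a (m + 1 - j))%nat by lia.
  apply (position_unique n l l_step _ _ (l' (m + 1 - j)%nat)); lia.
Qed.

Lemma position_tuple_middle (k t : nat) :
  n = (2 * k + 1)%nat -> m = (2 * t + 1)%nat -> a (S t) = k.
Proof.
  intros -> ->.
  destruct (Ha (S t) ltac:(lia)) as [Hat Hlt].
  pose proof (l'_antisym (S t) ltac:(lia)) as Hmid'.
  pose proof (l_antisym (S k) ltac:(lia)) as Hmid.
  replace (2 * t + 1 + 1 - S t)%nat with (S t) in Hmid' by lia.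
  replace (2 * k + 1 + 1 - S k)%nat with (S k) in Hmid by lia.
  pose proof (l_step k ltac:(lia)).
  apply (position_unique _ l l_step _ _ 0); lia.
Qed.

End PositionTuple.

Section Lambda.

Variables (n m : nat) (nu : nat -> Z) (a : nat -> nat).

Lemma lam_nonincreasing (l : nat -> Z) (j : nat) :
  (forall i : nat, (1 <= i < n)%nat -> l i >= l (S i) + 2) ->
  is_position_tuple n m l (l_of m nu) a ->
  (1 <= j < m)%nat -> nu j >= nu (S j) -> lam nu a j >= lam nu a (S j).
Proof.
  intros l_step Ha Hj Hnu.
  destruct (Ha j ltac:(lia)) as [Haj Hlj].
  destruct (Ha (S j) ltac:(lia)) as [Haj' Hlj'].
  unfold lam, l_of in *.
  destruct (Nat.le_gt_cases (a (S j)) (a j)); [lia |].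
  pose proof (l_gap n l l_step (S (a j)) (a (S j)) ltac:(lia) ltac:(lia)); lia.
Qed.

Lemma lam_antisym (j : nat) :
  (1 <= j <= m)%nat -> (a j + a (m + 1 - j) = n)%nat ->
  nu j + nu (m + 1 - j)%nat = nu 1%nat + nu m ->
  lam nu a j + lam nu a (m + 1 - j)%nat = w_of m nu + Z.of_nat n - Z.of_nat m - 1.
Proof. intros Hj Ha Hpure; unfold lam, w_of; lia. Qed.

Lemma lam_middle (k t : nat) :
  n = (2 * k + 1)%nat -> m = (2 * t + 1)%nat -> a (S t) = k ->
  nu (S t) + nu (S t) = nu 1%nat + nu m ->
  2 * lam nu a (S t) = w_of m nu + Z.of_nat n - Z.of_nat m - 2.
Proof. intros -> -> Ha Hpure; unfold lam, w_of in *; lia. Qed.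

End Lambda.

Lemma half_succ_odd (t : nat) : ((2 * t + 1 + 1) / 2)%nat = S t.
Proof. replace (2 * t + 1 + 1)%nat with (S t * 2)%nat by lia; apply Nat.div_mul; lia. Qed.

Theorem proposition3p1 (n m : nat) (mu nu : nat -> Z) (a : nat -> nat)
  (Hn : (1 <= n)%nat) (Hm : (1 <= m)%nat) (Hnm : ~ (n = 1%nat /\ m = 1%nat))
  (Hmu : X0plus n mu) (Hnu : X0plus m nu)
  (Hl1 : l_of n mu 1%nat > l_of m nu 1%nat)
  (Hneq : forall i j : nat, (1 <= i <= n)%nat -> (1 <= j <= m)%nat ->
     l_of n mu i <> l_of m nu j \/
     (Nat.odd n = true /\ Nat.odd m = true /\ (2 * i = n + 1)%nat /\ (2 * j = m + 1)%nat))
  (Ha : is_position_tuple n m (l_of n mu) (l_of m nu) a) :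
  (forall j : nat, (1 <= j < m)%nat -> lam nu a j >= lam nu a (S j)) /\
  (forall j : nat, (1 <= j <= m)%nat -> (2 * j <> m + 1)%nat ->
     lam nu a j + lam nu a (m + 1 - j)%nat = w_of m nu + Z.of_nat n - Z.of_nat m - 1) /\
  (Nat.odd n = true /\ Nat.odd m = true ->
     2 * lam nu a ((m + 1) / 2)%nat = w_of m nu + Z.of_nat n - Z.of_nat m - 2) /\
  (~ (Nat.odd n = true /\ Nat.odd m = true) ->
     forall j : nat, (1 <= j <= m)%nat ->
     lam nu a j + lam nu a (m + 1 - j)%nat = w_of m nu + Z.of_nat n - Z.of_nat m - 1).
Proof.
  destruct Hmu as [mu_mono mu_pure], Hnu as [nu_mono nu_pure].
  pose proof (l_of_step n mu mu_mono) as l_step.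
  pose proof (position_tuple_sym n m _ _ a l_step (l_of_antisym n mu mu_pure)
                (l_of_antisym m nu nu_pure) Ha) as a_sym.
  assert (Hoff : forall j, (1 <= j <= m)%nat ->
            (2 * j <> m + 1)%nat \/ ~ (Nat.odd n = true /\ Nat.odd m = true) ->
            lam nu a j + lam nu a (m + 1 - j)%nat
            = w_of m nu + Z.of_nat n - Z.of_nat m - 1).
  { intros j Hj Hgen; apply lam_antisym; [exact Hj | | exact (nu_pure j Hj)].
    apply a_sym; [exact Hj |].
    destruct (Ha j Hj) as [Haj _].
    destruct (Hneq (S (a j)) j ltac:(lia) Hj) as [? | (? & ? & _ & ?)]; tauto. }
  split; [| split; [| split]].
  - intros j Hj; exact (lam_nonincreasing n m nu a _ j l_step Ha Hj (nu_mono j Hj)).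
  - intros j Hj Hj2; exact (Hoff j Hj (or_introl Hj2)).
  - intros [[k Hk]%Nat.odd_spec [t Ht]%Nat.odd_spec].
    rewrite Ht, half_succ_odd, <- Ht.
    pose proof (nu_pure (S t) ltac:(lia)) as Hpure.
    replace (m + 1 - S t)%nat with (S t) in Hpure by lia.
    apply (lam_middle n m nu a k t Hk Ht); [| exact Hpure].
    exact (position_tuple_middle n m _ _ a l_step (l_of_antisym n mu mu_pure)
             (l_of_antisym m nu nu_pure) Ha k t Hk Ht).
  - intros Hnot j Hj; exact (Hoff j Hj (or_intror Hnot)).
Qed.
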